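(* Consider the program $\mathsf{P}$ of $\mathcal{H}$ consisting of the four clauses $\mathsf{s}\,\mathsf{Q}\leftarrow\mathsf{Q}\,(\mathsf{s}\,\mathsf{Q})$; $\mathsf{p}\,\mathsf{R}\leftarrow\mathsf{R}$; $\mathsf{q}\,\mathsf{R}\leftarrow\,\sim(\mathsf{w}\,\mathsf{R})$; $\mathsf{w}\,\mathsf{R}\leftarrow\,\sim\mathsf{R}$, where $\mathsf{Q}$ is a predicate variable of type $o\to o$, $\mathsf{R}$ is a predicate variable of type $o$, $\mathsf{p},\mathsf{q},\mathsf{w}$ are predicate constants of type $o\to o$ and $\mathsf{s}$ is a predicate constant of type $(o\to o)\to o$. Then the Herbrand interpretation $\mathcal{M}_\mathsf{P}$ of $\mathsf{P}$ (whose valuation function is the well-founded model of $\mathsf{Gr(P)}$) is not extensional.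
   Context: Types of $\mathcal{H}$: base types $\iota,o$; predicate types $\pi ::= o\mid\rho\to\pi$; argument types $\rho::=\iota\mid\pi$. Terms are built from variables, constants and function symbols by typed application; atoms are terms of type $o$; literals are atoms, equalities between terms of type $\iota$, and negated atoms $\sim\mathsf{E}$. For a program $\mathsf{P}$, $U_{\mathsf{P},\rho}$ is the set of ground terms of argument type $\rho$ built from the constants and function symbols occurring in $\mathsf{P}$. The ground instantiation $\mathsf{Gr(P)}$ is the set of all clauses obtained from clauses of $\mathsf{P}$ by replacing every variable by an element of $U_{\mathsf{P},\rho}$ of the same type; it is regarded as a (possibly infinite) propositional program with the ground atoms as propositional variables (ground equalities being the constants true/false according to syntactic identity). The well-founded model of $\mathsf{Gr(P)}$ is the usual (three-valued, values $\mathit{false},0,\mathit{true}$) well-founded model of this propositional program. $\mathcal{M}_\mathsf{P}$ is the Herbrand interpretation of $\mathsf{P}$ (symbols interpreted by themselves, application syntactic) whose valuation $v$ assigns to each ground atom its value in the well-founded model of $\mathsf{Gr(P)}$, with $v(\sim\mathsf{E})$ swapping $\mathit{true}/\mathit{false}$ and fixing $0$. Extensional equality: for a valuation $v$ and argument type $\rho$, the relation $\cong_{v,\rho}$ on $U_{\mathsf{P},\rho}$ is defined by: for $\rho=\iota$, $d\cong d'$ iff $d=d'$; for $\rho=o$, $d\cong d'$ iff $v(d)=v(d')$; for $\rho=\rho'\to\pi$, $d\cong_{v,\rho}d'$ iff $(d\,e)\cong_{v,\pi}(d'\,e')$ for all $e,e'\in U_{\mathsf{P},\rho'}$ with $e\cong_{v,\rho'}e'$.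 A Herbrand interpretation $I$ with valuation $v_I$ is extensional if for every argument type $\rho$ the relation $\cong_{v_I,\rho}$ is reflexive, i.e. $\mathsf{E}\cong_{v_I,\rho}\mathsf{E}$ for all $\mathsf{E}\in U_{\mathsf{P},\rho}$. *)

From Stdlib Require Import List ClassicalEpsilon.
Import ListNotations.

Inductive ty : Type := tI | tO | tArr (a b : ty).

Definition ty_eq_dec (a b : ty) : {a = b} + {a <> b}.
Proof. decide equality. Defined.

(* predicate types  pi ::= o | rho -> pi ;  argument types rho ::= iota | pi *)
Fixpoint is_pred (t : ty) : bool :=
  match t with
  | tI => false
  | tO => true
  | tArr a b =>
      (match a with tI => true | _ => is_pred a end) && is_pred b
  end.
Definition is_arg (t : ty) : bool :=
  match t with tI => true | _ => is_pred t end.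

(** * Terms: variables and constants/function symbols carry their type;
    a symbol is identified by (name, type). *)
Inductive term : Type :=
| V (x : nat) (t : ty)
| C (c : nat) (t : ty)
| Ap (f e : term).

Fixpoint type_of (e : term) : option ty :=
  match e with
  | V _ t => Some t
  | C _ t => Some t
  | Ap f a =>
      match type_of f, type_of a with
      | Some (tArr t1 t2), Some t1' =>
          if ty_eq_dec t1 t1' then Some t2 else None
      | _, _ => None
      end
  end.

Fixpoint vars_of (e : term) : list (nat * ty) :=
  match e with
  | V x t => [(x, t)]
  | C _ _ => []
  | Ap f a => vars_of f ++ vars_of a
  end.

Fixpoint consts_of (e : term) : list (nat * ty) :=
  match e with
  | V _ _ => []
  | C c t => [(c, t)]
  | Ap f a => consts_of f ++ consts_of a
  end.

Inductive lit : Type :=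
| LAtom (e : term)
| LEq (e1 e2 : term)        (* equality between terms of type iota *)
| LNeg (e : term).

Definition lit_terms (l : lit) : list term :=
  match l with LAtom e => [e] | LEq e1 e2 => [e1; e2] | LNeg e => [e] end.

Record clause : Type := Clause { head : term; body : list lit }.
Definition program := list clause.

Definition clause_terms (c : clause) : list term :=
  head c :: flat_map lit_terms (body c).
Definition clause_vars (c : clause) : list (nat * ty) :=
  flat_map vars_of (clause_terms c).
Definition prog_consts (P : program) : list (nat * ty) :=
  flat_map (fun c => flat_map consts_of (clause_terms c)) P.

Definition UP (P : program) (rho : ty) (e : term) : Prop :=
  vars_of e = [] /\ type_of e = Some rho /\
  (forall s, In s (consts_of e) -> In s (prog_consts P)).

Fixpoint subst (th : nat -> ty -> term) (e : term) : term :=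
  match e with
  | V x t => th x t
  | C c t => C c t
  | Ap f a => Ap (subst th f) (subst th a)
  end.

Definition subst_lit th (l : lit) : lit :=
  match l with
  | LAtom e => LAtom (subst th e)
  | LEq e1 e2 => LEq (subst th e1) (subst th e2)
  | LNeg e => LNeg (subst th e)
  end.

Definition subst_clause th (c : clause) : clause :=
  Clause (subst th (head c)) (map (subst_lit th) (body c)).

Definition Gr (P : program) (g : clause) : Prop :=
  exists c th, In c P /\
    (forall x t, In (x, t) (clause_vars c) -> UP P t (th x t)) /\
    g = subst_clause th c.

(** * Well-founded model of the (possibly infinite) propositional program
    Gr(P), whose propositional variables are the ground atoms; ground
    equalities are true/false according to syntactic identity.
    We use the alternating-fixpoint characterisation (Van Gelder):
    Gamma J = least model of the Gelfond-Lifschitz reduct Gr(P)/J;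
    true atoms = lfp (Gamma o Gamma), non-false atoms = Gamma (true atoms). *)

Definition lit_holds (S J : term -> Prop) (l : lit) : Prop :=
  match l with
  | LAtom a => S a
  | LEq e1 e2 => e1 = e2
  | LNeg a => ~ J a
  end.

Definition Gamma (P : program) (J : term -> Prop) : term -> Prop :=
  fun a => forall S : term -> Prop,
    (forall g, Gr P g -> (forall l, In l (body g) -> lit_holds S J l) ->
               S (head g)) ->
    S a.

Definition wf_true (P : program) : term -> Prop :=
  fun a => forall S : term -> Prop,
    (forall b, Gamma P (Gamma P S) b -> S b) -> S a.

Definition wf_nonfalse (P : program) : term -> Prop :=
  Gamma P (wf_true P).

Inductive tv : Type := vFalse | vZero | vTrue.

Definition MP_val (P : program) (a : term) : tv :=
  if excluded_middle_informative (wf_true P a) then vTrue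
  else if excluded_middle_informative (wf_nonfalse P a) then vZero
  else vFalse.

Fixpoint ext_eq (P : program) (v : term -> tv) (rho : ty) (d d' : term)
  : Prop :=
  match rho with
  | tI => d = d'
  | tO => v d = v d'
  | tArr r pi =>
      forall e e', UP P r e -> UP P r e' -> ext_eq P v r e e' ->
                   ext_eq P v pi (Ap d e) (Ap d' e')
  end.

Definition extensional (P : program) (v : term -> tv) : Prop :=
  forall rho, is_arg rho = true ->
    forall E, UP P rho E -> ext_eq P v rho E E.

Definition oo := tArr tO tO.
Definition cp := C 0 oo.
Definition cq := C 1 oo.
Definition cw := C 2 oo.
Definition cs := C 3 (tArr oo tO).
Definition vQ := V 0 oo.
Definition vR := V 1 tO.

Definition P0 : program :=
  [ Clause (Ap cs vQ) [LAtom (Ap vQ (Ap cs vQ))];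
    Clause (Ap cp vR) [LAtom vR];
    Clause (Ap cq vR) [LNeg (Ap cw vR)];
    Clause (Ap cw vR) [LNeg vR] ].

(* The constants p and q both act as the identity on truth values in M_P:
   p R is derived exactly from R, and q R is reached from R through two
   negations (q R <- ~ w R, w R <- ~ R).  Hence p and q are extensionally
   equal, and extensionality would force s p and s q to have the same value.
   But the only support of s p is p (s p), which needs s p again: an unfounded
   loop, so s p is false.  The atom s q instead depends on itself through an
   even number of negations, s q <- q (s q) <- ~ w (s q) <- ~ ~ s q, so it is
   undefined. *)
From Stdlib Require Import List Classical ClassicalEpsilon.
Import ListNotations.

Lemma UP_const P c t : In (c, t) (prog_consts P) -> UP P t (C c t).
Proof.
  intros Hc. split; [reflexivity|]. split; [reflexivity|].
  intros s [<-|[]]. exact Hc.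
Qed.

Lemma UP_Ap P a b f e : UP P (tArr a b) f -> UP P a e -> UP P b (Ap f e).
Proof.
  intros [Vf [Tf Cf]] [Ve [Te Ce]]. split; [|split].
  - simpl. rewrite Vf, Ve. reflexivity.
  - simpl. rewrite Tf, Te. destruct (ty_eq_dec a a) as [_|NE]; [reflexivity|].
    contradiction NE; reflexivity.
  - intros s Hs. simpl in Hs. apply in_app_or in Hs. destruct Hs; auto.
Qed.

Lemma Gr_subst_const P c t X :
  In c P -> (forall v, In v (clause_vars c) -> snd v = t) -> UP P t X ->
  Gr P (subst_clause (fun _ _ => X) c).
Proof.
  intros Hc Ht HX. exists c, (fun _ _ => X). split; [exact Hc|]. split; [|reflexivity].
  intros x t' Hv. specialize (Ht _ Hv). simpl in Ht. subst t'. exact HX.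
Qed.

Section WellFoundedSemantics.

Variable P : program.

Definition Gamma_closed (J S : term -> Prop) : Prop :=
  forall g, Gr P g -> (forall l, In l (body g) -> lit_holds S J l) -> S (head g).

Lemma lit_holds_mono (S S' J J' : term -> Prop) l :
  (forall a, S a -> S' a) -> (forall a, J' a -> J a) ->
  lit_holds S J l -> lit_holds S' J' l.
Proof. destruct l; simpl; auto. Qed.

Lemma Gamma_ind J S a : Gamma_closed J S -> Gamma P J a -> S a.
Proof. intros HS Ha. exact (Ha S HS). Qed.

Lemma Gamma_closed_Gamma J : Gamma_closed J (Gamma P J).
Proof.
  intros g Hg Hb S HS. apply HS; [exact Hg|].
  intros l Hl. apply (lit_holds_mono (Gamma P J) S J J); auto.
  intros a Ha. exact (Ha S HS).
Qed.

Lemma Gamma_supported J a :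
  Gamma P J a ->
  exists g, Gr P g /\ head g = a /\
            forall l, In l (body g) -> lit_holds (Gamma P J) J l.
Proof.
  intros Ha.
  refine (proj2 (Gamma_ind J (fun b => Gamma P J b /\ exists g, Gr P g /\ head g = b /\
            forall l, In l (body g) -> lit_holds (Gamma P J) J l) a _ Ha)).
  intros g Hg Hb.
  assert (Hb' : forall l, In l (body g) -> lit_holds (Gamma P J) J l).
  { intros l Hl. eapply lit_holds_mono; [| |exact (Hb l Hl)]; auto.
    intros b [Hb' _]. exact Hb'. }
  split; [exact (Gamma_closed_Gamma J g Hg Hb')|].
  exists g. auto.
Qed.

Lemma Gamma_antimono (J J' : term -> Prop) :
  (forall a, J a -> J' a) -> forall a, Gamma P J' a -> Gamma P J a.
Proof.
  intros HJ a Ha S HS. apply Ha. intros g Hg Hb. apply HS; [exact Hg|].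
  intros l Hl. apply (lit_holds_mono S S J' J); auto.
Qed.

Lemma Gamma_ext (J J' : term -> Prop) :
  (forall a, J a <-> J' a) -> forall a, Gamma P J a <-> Gamma P J' a.
Proof.
  intros HJ a. split; apply Gamma_antimono; intros b; apply HJ.
Qed.

Lemma wf_true_fixpoint a : wf_true P a <-> Gamma P (Gamma P (wf_true P)) a.
Proof.
  assert (Hpre : forall b, Gamma P (Gamma P (wf_true P)) b -> wf_true P b).
  { intros b Hb S HS. apply HS. revert b Hb.
    apply Gamma_antimono, Gamma_antimono. intros c Hc. exact (Hc S HS). }
  split; [|apply Hpre].
  intros Ha. apply Ha. intros b. apply Gamma_antimono, Gamma_antimono. exact Hpre.
Qed.

Lemma wf_nonfalse_fixpoint a :
  wf_nonfalse P a <-> Gamma P (Gamma P (wf_nonfalse P)) a.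
Proof. apply Gamma_ext, wf_true_fixpoint. Qed.

Lemma MP_val_congr a b :
  (wf_true P a <-> wf_true P b) -> (wf_nonfalse P a <-> wf_nonfalse P b) ->
  MP_val P a = MP_val P b.
Proof.
  intros HT HN. unfold MP_val.
  destruct (excluded_middle_informative (wf_true P a)),
           (excluded_middle_informative (wf_true P b)); try tauto;
  destruct (excluded_middle_informative (wf_nonfalse P a)),
           (excluded_middle_informative (wf_nonfalse P b)); tauto.
Qed.

Lemma MP_val_eq_of_Gamma a b :
  (forall J, Gamma P J a <-> Gamma P J b) -> MP_val P a = MP_val P b.
Proof.
  intros H. apply MP_val_congr; [|apply H].
  rewrite !wf_true_fixpoint. apply H.
Qed.

(* Both wf_true and wf_nonfalse are fixpoints of Gamma o Gamma, so an atom
   obtained from b by two Gamma steps has the value of b. *)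
Lemma MP_val_eq_of_Gamma2 a b :
  (forall J, Gamma P (Gamma P J) a <-> J b) -> MP_val P a = MP_val P b.
Proof.
  intros H. apply MP_val_congr.
  - rewrite wf_true_fixpoint. apply H.
  - rewrite wf_nonfalse_fixpoint. apply H.
Qed.

Lemma MP_val_false a : (forall J, ~ Gamma P J a) -> MP_val P a = vFalse.
Proof.
  intros H. unfold MP_val.
  destruct (excluded_middle_informative (wf_true P a)) as [Ha|_].
  - rewrite wf_true_fixpoint in Ha. contradiction (H _ Ha).
  - destruct (excluded_middle_informative (wf_nonfalse P a)) as [Ha|_];
      [contradiction (H _ Ha)|reflexivity].
Qed.

Lemma MP_val_nonfalse a : wf_nonfalse P a -> MP_val P a <> vFalse.
Proof.
  intros Ha. unfold MP_val.
  destruct (excluded_middle_informative (wf_true P a)); [discriminate|].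
  destruct (excluded_middle_informative (wf_nonfalse P a)); [discriminate|tauto].
Qed.

End WellFoundedSemantics.

Lemma UP_P0_p : UP P0 oo cp.
Proof. apply UP_const. simpl. tauto. Qed.

Lemma UP_P0_q : UP P0 oo cq.
Proof. apply UP_const. simpl. tauto. Qed.

Lemma UP_P0_s : UP P0 (tArr oo tO) cs.
Proof. apply UP_const. simpl. tauto. Qed.

Lemma UP_P0_sq : UP P0 tO (Ap cs cq).
Proof. exact (UP_Ap _ _ _ _ _ UP_P0_s UP_P0_q). Qed.

Lemma Gr_P0_inv g :
  Gr P0 g ->
  (exists X, g = Clause (Ap cs X) [LAtom (Ap X (Ap cs X))]) \/
  (exists R, g = Clause (Ap cp R) [LAtom R]) \/
  (exists R, g = Clause (Ap cq R) [LNeg (Ap cw R)]) \/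
  (exists R, g = Clause (Ap cw R) [LNeg R]).
Proof.
  intros [c [th [Hc [_ ->]]]].
  simpl in Hc. destruct Hc as [<-|[<-|[<-|[<-|[]]]]]; unfold subst_clause; simpl.
  - left. eauto.
  - right; left. eauto.
  - right; right; left. eauto.
  - right; right; right. eauto.
Qed.

Lemma Gr_P0_s X : UP P0 oo X -> Gr P0 (Clause (Ap cs X) [LAtom (Ap X (Ap cs X))]).
Proof.
  apply (Gr_subst_const P0 (Clause (Ap cs vQ) [LAtom (Ap vQ (Ap cs vQ))])).
  - simpl. tauto.
  - simpl. intros v Hv. intuition (subst; reflexivity).
Qed.

Lemma Gr_P0_p R : UP P0 tO R -> Gr P0 (Clause (Ap cp R) [LAtom R]).
Proof.
  apply (Gr_subst_const P0 (Clause (Ap cp vR) [LAtom vR])).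
  - simpl. tauto.
  - simpl. intros v Hv. intuition (subst; reflexivity).
Qed.

Lemma Gr_P0_q R : UP P0 tO R -> Gr P0 (Clause (Ap cq R) [LNeg (Ap cw R)]).
Proof.
  apply (Gr_subst_const P0 (Clause (Ap cq vR) [LNeg (Ap cw vR)])).
  - simpl. tauto.
  - simpl. intros v Hv. intuition (subst; reflexivity).
Qed.

Lemma Gr_P0_w R : UP P0 tO R -> Gr P0 (Clause (Ap cw R) [LNeg R]).
Proof.
  apply (Gr_subst_const P0 (Clause (Ap cw vR) [LNeg vR])).
  - simpl. tauto.
  - simpl. intros v Hv. intuition (subst; reflexivity).
Qed.

Lemma Gamma_P0_inv J a :
  Gamma P0 J a ->
  (exists X, a = Ap cs X /\ Gamma P0 J (Ap X (Ap cs X))) \/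
  (exists R, a = Ap cp R /\ Gamma P0 J R) \/
  (exists R, a = Ap cq R /\ ~ J (Ap cw R)) \/
  (exists R, a = Ap cw R /\ ~ J R).
Proof.
  intros Ha. destruct (Gamma_supported _ _ _ Ha) as [g [Hg [<- Hb]]].
  destruct (Gr_P0_inv g Hg) as [[X ->]|[[R ->]|[[R ->]|[R ->]]]];
    specialize (Hb _ (or_introl eq_refl)); simpl in Hb |- *.
  - left. eauto.
  - right; left. eauto.
  - right; right; left. eauto.
  - right; right; right. eauto.
Qed.

Lemma Gamma_P0_p J e : UP P0 tO e -> Gamma P0 J (Ap cp e) <-> Gamma P0 J e.
Proof.
  intros He. split.
  - intros Ha.
    destruct (Gamma_P0_inv _ _ Ha) as [[X [E _]]|[[R [E HR]]|[[R [E _]]|[R [E _]]]]];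
      inversion E; subst; exact HR.
  - intros Ha. apply (Gamma_closed_Gamma _ _ _ (Gr_P0_p e He)).
    intros l [<-|[]]. exact Ha.
Qed.

Lemma Gamma_P0_q J e : UP P0 tO e -> Gamma P0 J (Ap cq e) <-> ~ J (Ap cw e).
Proof.
  intros He. split.
  - intros Ha.
    destruct (Gamma_P0_inv _ _ Ha) as [[X [E _]]|[[R [E _]]|[[R [E HR]]|[R [E _]]]]];
      inversion E; subst; exact HR.
  - intros Ha. apply (Gamma_closed_Gamma _ _ _ (Gr_P0_q e He)).
    intros l [<-|[]]. exact Ha.
Qed.

Lemma Gamma_P0_w J e : UP P0 tO e -> Gamma P0 J (Ap cw e) <-> ~ J e.
Proof.
  intros He. split.
  - intros Ha.
    destruct (Gamma_P0_inv _ _ Ha) as [[X [E _]]|[[R [E _]]|[[R [E _]]|[R [E HR]]]]];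
      inversion E; subst; exact HR.
  - intros Ha. apply (Gamma_closed_Gamma _ _ _ (Gr_P0_w e He)).
    intros l [<-|[]]. exact Ha.
Qed.

Lemma Gamma_P0_not_sp J : ~ Gamma P0 J (Ap cs cp).
Proof.
  intros Ha.
  refine (proj1 (Gamma_ind P0 J (fun a => a <> Ap cs cp /\ a <> Ap cp (Ap cs cp))
                   _ _ Ha) eq_refl).
  intros g Hg Hb.
  destruct (Gr_P0_inv g Hg) as [[X ->]|[[R ->]|[[R ->]|[R ->]]]];
    specialize (Hb _ (or_introl eq_refl)); simpl in Hb |- *;
    split; intros E; inversion E; subst; tauto.
Qed.

Lemma Gamma_P0_sq J : ~ J (Ap cw (Ap cs cq)) -> Gamma P0 J (Ap cs cq).
Proof.
  intros HJ. apply (Gamma_closed_Gamma _ _ _ (Gr_P0_s cq UP_P0_q)).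
  intros l [<-|[]]. apply Gamma_P0_q; [exact UP_P0_sq|].
  exact HJ.
Qed.

Lemma MP_val_P0_p e : UP P0 tO e -> MP_val P0 (Ap cp e) = MP_val P0 e.
Proof.
  intros He. apply MP_val_eq_of_Gamma. intros J. apply Gamma_P0_p, He.
Qed.

Lemma MP_val_P0_q e : UP P0 tO e -> MP_val P0 (Ap cq e) = MP_val P0 e.
Proof.
  intros He. apply MP_val_eq_of_Gamma2. intros J.
  rewrite Gamma_P0_q, Gamma_P0_w by exact He.
  split; [apply NNPP|tauto].
Qed.

Lemma ext_eq_P0_p_q : ext_eq P0 (MP_val P0) oo cp cq.
Proof.
  simpl. intros e e' He He' Hee'.
  rewrite MP_val_P0_p, MP_val_P0_q by assumption. exact Hee'.
Qed.

Lemma MP_val_P0_sp : MP_val P0 (Ap cs cp) = vFalse.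
Proof. apply MP_val_false, Gamma_P0_not_sp. Qed.

Lemma wf_nonfalse_P0_sq : wf_nonfalse P0 (Ap cs cq).
Proof.
  apply Gamma_P0_sq. intros HT.
  refine (HT (fun b => b <> Ap cw (Ap cs cq)) _ eq_refl).
  intros b Hb ->. rewrite Gamma_P0_w in Hb by exact UP_P0_sq.
  apply Hb, Gamma_P0_sq. tauto.
Qed.

Theorem lemma1 : ~ extensional P0 (MP_val P0).
Proof.
  intros Hext.
  assert (Hs : MP_val P0 (Ap cs cp) = MP_val P0 (Ap cs cq))
    by exact (Hext (tArr oo tO) eq_refl cs UP_P0_s cp cq UP_P0_p UP_P0_q ext_eq_P0_p_q).
  apply (MP_val_nonfalse _ _ wf_nonfalse_P0_sq).
  rewrite <- Hs. exact MP_val_P0_sp.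
Qed.
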